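(* Let $T$ be a linear operator bounded on $L^2(\mathbb R^n)$ with kernel $K$ (locally integrable on $\mathbb R^{2n}$ off the diagonal) such that $Tg(x)=\int K(x,y)g(y)\,dy$ for $x$ outside the support of a compactly supported $g\in L^2$, and such that: (a) for some $\mu>0$, $|K(x,y)|\le C\min\{|x-y|^{-n},|x-y|^{-n-\mu}\}$ for $x\neq y$; (b) for some $\delta>0$ and all $0<r<1$, $j\in\mathbb N$, $z\in\mathbb R^n$ and $|y-z|<r$, $$\int_{A_j(z,r)}\big(|K(x,y)-K(x,z)|+|K(y,x)-K(z,x)|\big)dx\lesssim 2^{-j\delta},$$ where $A_j(z,r)=\{x:2^jr\le|x-z|<2^{j+1}r\}$. Then for every compactly supported $g\in L^2(\mathbb R^n)$ with $\int g=0$ and every multi-index $\alpha$ with $|\alpha|<\min\{\mu,\delta\}$, the function $x\mapsto x^\alpha Tg(x)$ belongs to $L^1(\mathbb R^n)$. *)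

From HB Require Import structures.
From mathcomp Require Import all_boot all_order all_algebra.
From mathcomp Require Import all_classical all_reals all_analysis.

Set Implicit Arguments.
Unset Strict Implicit.
Unset Printing Implicit Defensive.
Import Order.TTheory GRing.Theory Num.Theory.
Import numFieldNormedType.Exports.

Local Open Scope classical_set_scope.
Local Open Scope ring_scope.

(* Points of R^n are n-tuples of reals ([n.-tuple R] carries the product
   (= Borel) sigma-algebra in MathComp-Analysis). *)
Section Rn.
Variable R : realType.

(* Lebesgue integral on R^n of a (nonnegative, measurable) function, defined
   as the iterated one-dimensional Lebesgue integral (the n-fold product of
   Lebesgue measure; Tonelli). *)
Fixpoint lint (n : nat) : (n.-tuple R -> \bar R) -> \bar R :=
  match n return (n.-tuple R -> \bar R) -> \bar R with
  | 0 => fun f => f [tuple]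
  | m.+1 => fun f =>
      (\int[@lebesgue_measure R]_t lint (fun y : m.-tuple R => f (cons_tuple t y)))%E
  end.

Definition sint (n : nat) (f : n.-tuple R -> R) : \bar R :=
  (lint (fun x => (Num.max (f x) 0)%:E) - lint (fun x => (Num.max (- f x) 0)%:E))%E.

Definition eucl_dist (n : nat) (x y : n.-tuple R) : R :=
  Num.sqrt (\sum_(i < n) (tnth x i - tnth y i) ^+ 2).
Definition eucl_norm (n : nat) (x : n.-tuple R) : R :=
  Num.sqrt (\sum_(i < n) tnth x i ^+ 2).

Definition inL2 (n : nat) (f : n.-tuple R -> R) : Prop :=
  measurable_fun [set: n.-tuple R] f /\ (lint (fun x => (f x ^+ 2)%:E) < +oo)%E.
Definition inL1 (n : nat) (f : n.-tuple R -> R) : Prop :=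
  measurable_fun [set: n.-tuple R] f /\ (lint (fun x => `|f x|%:E) < +oo)%E.

Definition L2norm2 (n : nat) (f : n.-tuple R -> R) : \bar R :=
  lint (fun x => (f x ^+ 2)%:E).

Definition compact_support (n : nat) (g : n.-tuple R -> R) : Prop :=
  exists M : R, forall y, M < eucl_norm y -> g y = 0.

Definition outside_support (n : nat) (g : n.-tuple R -> R) (x : n.-tuple R) : Prop :=
  exists2 r : R, 0 < r & forall y, eucl_dist x y < r -> g y = 0.

Definition annulus (n : nat) (j : nat) (z : n.-tuple R) (r : R) : set (n.-tuple R) :=
  [set x | 2 ^+ j * r <= eucl_dist x z < 2 ^+ j.+1 * r].

Definition monom (n : nat) (alpha : n.-tuple nat) (x : n.-tuple R) : R :=
  \prod_(i < n) tnth x i ^+ tnth alpha i.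
Definition mindex_size (n : nat) (alpha : n.-tuple nat) : nat :=
  \sum_(i < n) tnth alpha i.

End Rn.

(* Only the size condition (a) is needed; neither the smoothness condition (b)
   nor the cancellation of g enters.  Let u = T g, which is in L^2, and let g
   vanish outside the ball of radius M.  On the cube [-R0, R0]^n, R0 = 2M + 1,
   one has |x^alpha u(x)| <= R0^|alpha| (1 + u(x)^2).  Off the cube the largest
   coordinate m = |x_k| exceeds R0, so x lies at distance >= m/2 from the
   support of g, and the kernel representation together with (a) gives
   |u(x)| <= C m^-(n+mu) ||g||_1.  Hence |x^alpha u(x)| <= C' m^(|alpha|-n-mu),
   which is dominated by C'' prod_j (1 + |x_j|)^-p with p = (n+mu-|alpha|)/n > 1,
   a product of integrable functions of one variable. *)

From HB Require Import structures.
From mathcomp Require Import all_boot all_order all_algebra.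
From mathcomp Require Import all_classical all_reals all_analysis.
From mathcomp Require Import measurable_realfun lra ring.
Set Implicit Arguments.
Unset Strict Implicit.
Unset Printing Implicit Defensive.
Import Order.TTheory GRing.Theory Num.Theory.
Import numFieldNormedType.Exports.
Local Open Scope classical_set_scope.
Local Open Scope ring_scope.

Section IteratedIntegral.
Variable R : realType.
Local Notation mu := (@lebesgue_measure R).
Local Open Scope ereal_scope.

Lemma lint_ge0 n (f : n.-tuple R -> \bar R) : (forall x, 0 <= f x) -> 0 <= lint f.
Proof.
elim: n f => [|n IH] f f0 /=; first exact: f0.
by apply: integral_ge0 => t _; apply: IH => y; apply: f0.
Qed.

Lemma measurable_lint n : forall d (X : measurableType d) (F : X * n.-tuple R -> \bar R),
  measurable_fun [set: X * n.-tuple R] F -> (forall p, 0 <= F p) ->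
  measurable_fun [set: X] (fun x => lint (fun y => F (x, y))).
Proof.
elim: n => [|n IH] d X F mF F0 /=; first exact: measurableT_comp mF _.
pose G (q : (X * R) * n.-tuple R) := F (q.1.1, cons_tuple q.1.2 q.2).
have mG : measurable_fun setT G.
  apply: measurableT_comp mF _; apply: measurable_fun_pair; first exact: measurableT_comp.
  exact: (measurable_cons (measurableT_comp measurable_snd measurable_fst) measurable_snd).
have G0 q : 0 <= lint (fun y : n.-tuple R => G (q, y)) by apply: lint_ge0 => y; exact: F0.
exact: (@measurable_fun_fubini_tonelli_F _ _ _ _ R mu _ (IH _ _ G mG (fun q => F0 _)) G0).
Qed.

Lemma measurable_cons_section n (f : n.+1.-tuple R -> \bar R) t :
  measurable_fun [set: n.+1.-tuple R] f ->
  measurable_fun [set: n.-tuple R] (fun y => f (cons_tuple t y)).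
Proof.
move=> mf; apply: measurableT_comp mf _.
exact: (measurable_cons (measurable_cst t) (@measurable_id _ (n.-tuple R) setT)).
Qed.

Lemma measurable_lint_cons n (f : n.+1.-tuple R -> \bar R) :
  measurable_fun [set: n.+1.-tuple R] f -> (forall x, 0 <= f x) ->
  measurable_fun [set: R] (fun t => lint (fun y : n.-tuple R => f (cons_tuple t y))).
Proof.
move=> mf f0.
have mF : measurable_fun [set: R * n.-tuple R] (fun p => f (cons_tuple p.1 p.2)).
  by apply: measurableT_comp mf _; exact: (measurable_cons measurable_fst measurable_snd).
have h := @measurable_lint n _ _ _ mF (fun p => f0 _).
exact: h.
Qed.

Lemma le_lint n (f g : n.-tuple R -> \bar R) :
  measurable_fun [set: n.-tuple R] f -> measurable_fun [set: n.-tuple R] g ->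
  (forall x, 0 <= f x) -> (forall x, f x <= g x) -> lint f <= lint g.
Proof.
elim: n f g => [|n IH] f g mf mg f0 fg /=; first exact: fg.
have g0 x : 0 <= g x := le_trans (f0 x) (fg x).
apply: ge0_le_integral => //.
- by move=> t _; apply: lint_ge0.
- exact: measurable_lint_cons.
- exact: measurable_lint_cons.
- by move=> t _; apply: IH => //; exact: measurable_cons_section.
Qed.

Lemma lintD n (f g : n.-tuple R -> \bar R) :
  measurable_fun [set: n.-tuple R] f -> measurable_fun [set: n.-tuple R] g ->
  (forall x, 0 <= f x) -> (forall x, 0 <= g x) ->
  lint (fun x => f x + g x) = lint f + lint g.
Proof.
elim: n f g => [|n IH] f g mf mg f0 g0 //=.
rewrite -ge0_integralD //; last 4 first.
- by move=> t _; apply: lint_ge0.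
- exact: measurable_lint_cons.
- by move=> t _; apply: lint_ge0.
- exact: measurable_lint_cons.
by apply: eq_integral => t _; apply: IH => //; exact: measurable_cons_section.
Qed.

Lemma lintZl n (c : R) (f : n.-tuple R -> \bar R) : (0 <= c)%R ->
  measurable_fun [set: n.-tuple R] f -> (forall x, 0 <= f x) ->
  lint (fun x => c%:E * f x) = c%:E * lint f.
Proof.
elim: n f => [|n IH] f c0 mf f0 //=.
rewrite -ge0_integralZl_EFin //; last 2 first.
- by move=> t _; apply: lint_ge0.
- exact: measurable_lint_cons.
by apply: eq_integral => t _; apply: IH => //; exact: measurable_cons_section.
Qed.

End IteratedIntegral.

Section TensorFunction.
Variable R : realType.
Local Notation mu := (@lebesgue_measure R).

Definition tensor_fun n (phi : R -> R) (x : n.-tuple R) : R :=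
  \prod_(i < n) phi (tnth x i).

Lemma tensor_fun_cons n (phi : R -> R) t (y : n.-tuple R) :
  tensor_fun phi (cons_tuple t y) = phi t * tensor_fun phi y.
Proof. by rewrite /tensor_fun big_ord_recl tnth0; under eq_bigr do rewrite tnthS. Qed.

Lemma tensor_fun_ge0 n (phi : R -> R) (x : n.-tuple R) :
  (forall t, 0 <= phi t) -> 0 <= tensor_fun phi x.
Proof. by move=> phi0; apply: prodr_ge0 => i _. Qed.

Lemma measurable_tensor_fun n (phi : R -> R) : measurable_fun [set: R] phi ->
  measurable_fun [set: n.-tuple R] (tensor_fun phi).
Proof.
move=> mphi; apply: measurable_prod => i _.
exact: measurableT_comp mphi (measurable_tnth i).
Qed.

Lemma lint_tensor_fun_le n (phi : R -> R) (c : R) : measurable_fun [set: R] phi ->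
  (forall t, 0 <= phi t) -> (\int[mu]_t (phi t)%:E <= c%:E)%E ->
  (lint (fun x : n.-tuple R => (tensor_fun phi x)%:E) <= (c ^+ n)%:E)%E.
Proof.
move=> mphi phi0 hc.
have c0 : 0 <= c.
  by rewrite -lee_fin; apply: le_trans hc; apply: integral_ge0 => t _; rewrite lee_fin.
elim: n => [|n IH] /=; first by rewrite /tensor_fun big_ord0 expr0.
have lint_cons t : lint (fun y : n.-tuple R => (tensor_fun phi (cons_tuple t y))%:E)
    = ((phi t)%:E * lint (fun y : n.-tuple R => (tensor_fun phi y)%:E))%E.
  rewrite -lintZl //; last 2 first.
  - by apply/measurable_EFinP; exact: measurable_tensor_fun.
  - by move=> y; rewrite lee_fin tensor_fun_ge0.
  by congr lint; apply: funext => y; rewrite tensor_fun_cons EFinM.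
under eq_integral do rewrite lint_cons.
have lint_ge0' : (0 <= lint (fun y : n.-tuple R => (tensor_fun phi y)%:E))%E.
  by apply: lint_ge0 => y; rewrite lee_fin tensor_fun_ge0.
rewrite ge0_integralZr //.
- rewrite exprS EFinM; apply: lee_pmul => //.
  by apply: integral_ge0 => t _; rewrite lee_fin.
- exact/measurable_EFinP.
- by move=> t _; rewrite lee_fin.
Qed.

End TensorFunction.

Section NonnegIntegrable.
Variables (R : realType) (n : nat).
Local Open Scope ereal_scope.

Definition nnintegrable (f : n.-tuple R -> R) : Prop :=
  [/\ measurable_fun [set: n.-tuple R] f, forall x, (0 <= f x)%R
    & lint (fun x => (f x)%:E) < +oo].

Lemma nnintegrableD (f g : n.-tuple R -> R) :
  nnintegrable f -> nnintegrable g -> nnintegrable (fun x => f x + g x)%R.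
Proof.
move=> [mf f0 fI] [mg g0 gI]; split; first exact: measurable_funD.
  by move=> x; rewrite addr_ge0.
under eq_fun do rewrite EFinD.
by rewrite lintD //; [exact: lte_add_pinfty | exact/measurable_EFinP..].
Qed.

Lemma nnintegrableZ (c : R) (f : n.-tuple R -> R) : (0 <= c)%R ->
  nnintegrable f -> nnintegrable (fun x => c * f x)%R.
Proof.
move=> c0 [mf f0 fI]; split; first exact: measurable_funM.
  by move=> x; rewrite mulr_ge0.
under eq_fun do rewrite EFinM.
rewrite lintZl //; last exact/measurable_EFinP.
by apply: lte_mul_pinfty; rewrite ?lee_fin.
Qed.

Lemma nnintegrable_sqr (f : n.-tuple R -> R) :
  inL2 f -> nnintegrable (fun x => f x ^+ 2)%R.
Proof.
by move=> [mf fI]; split => // [|x]; [exact: measurable_funX | exact: sqr_ge0].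
Qed.

Lemma nnintegrable_tensor_fun (phi : R -> R) (c : R) : measurable_fun [set: R] phi ->
  (forall t, 0 <= phi t)%R -> \int[lebesgue_measure]_t (phi t)%:E <= c%:E ->
  nnintegrable (tensor_fun phi).
Proof.
move=> mphi phi0 hc; split.
- exact: measurable_tensor_fun.
- by move=> x; exact: tensor_fun_ge0.
- exact: le_lt_trans (lint_tensor_fun_le n mphi phi0 hc) (ltry _).
Qed.

Lemma inL1_dominated (f h : n.-tuple R -> R) : measurable_fun [set: n.-tuple R] f ->
  (forall x, `|f x| <= h x)%R -> nnintegrable h -> inL1 f.
Proof.
move=> mf fh [mh _ hI]; split => //; apply: le_lt_trans hI.
apply: le_lint => [||x|x]; rewrite ?lee_fin //.
- exact/measurable_EFinP/measurableT_comp.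
- exact/measurable_EFinP.
Qed.

End NonnegIntegrable.

Section Decay.
Variable R : realType.
Local Notation mu := (@lebesgue_measure R).

Lemma powRN_anti (a b s : R) : 0 < a -> a <= b -> 0 <= s -> b `^ (- s) <= a `^ (- s).
Proof.
move=> a0 ab s0; rewrite !powRN lef_pV2 ?posrE ?powR_gt0 //; last exact: lt_le_trans ab.
by apply: ge0_ler_powR => //; rewrite nnegrE ltW // (lt_le_trans a0).
Qed.

Definition decay (p t : R) : R := (1 + `|t|) `^ (- p).

Lemma decay_ge0 p t : 0 <= decay p t.
Proof. exact: powR_ge0. Qed.

Lemma continuous_powR (q a : R) : 0 < a -> {for a, continuous (@powR R ^~ q)}.
Proof.
move=> a0; apply: differentiable_continuous; apply/derivable1_diffP.
by apply: derivable_powR; rewrite in_itv /= andbT.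
Qed.

Lemma continuous_decay p : continuous (decay p).
Proof.
move=> t; rewrite (_ : decay p = (@powR R ^~ (- p)) \o (fun t : R => 1 + `|t|)) //.
apply: continuous_comp.
  apply: continuousD; [exact: cst_continuous | exact: norm_continuous].
by apply: continuous_powR; have := normr_ge0 t; lra.
Qed.

Lemma measurable_decay p : measurable_fun [set: R] (decay p).
Proof. by apply: continuous_measurable_fun; exact: continuous_decay. Qed.

Lemma powR_shift_cvgy (q : R) : q < 0 -> (1 + x) `^ q @[x --> +oo] --> 0.
Proof.
move=> q0; apply/cvgrPdist_lt => e e0.
set X := expR (ln e / q).
have X0 : 0 < X by exact: expR_gt0.
near=> x.
have xX : X < x by near: x; apply: nbhs_pinfty_gt; apply: num_real.
have x1 : 0 < 1 + x by lra.
rewrite sub0r normrN ger0_norm; last exact: powR_ge0.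
rewrite /powR gt_eqF // -[X in _ < X](lnK (x := e)) ?posrE // ltr_expR.
have lnX : ln e / q < ln (1 + x) by rewrite -[ln e / q]expRK -/X ltr_ln ?posrE; lra.
have -> : ln e = q * (ln e / q) by rewrite mulrC divfK // lt_eqF.
rewrite mulrC; nra.
Unshelve. all: end_near. Qed.

Lemma integral_decay (p : R) : 1 < p ->
  (\int[mu]_t (decay p t)%:E = (2 / (p - 1))%:E)%E.
Proof.
move=> p1.
rewrite ge0_symfun_integralT; last 3 first.
- exact: decay_ge0.
- exact: continuous_decay.
- by move=> t; rewrite /decay /= normrN.
rewrite -set_itvcy.
set q := 1 - p.
have q0 : q != 0 by rewrite /q; apply/eqP; lra.
pose F : R -> R := q^-1 \*: ((@powR R ^~ q) \o (cst 1 + id)).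
have dF (x : R) : 0 < x -> is_derive x 1 F (decay p x).
  move=> x0; apply: is_derive_eq.
    apply: is_deriveZ; apply: is_derive1_comp.
    by apply: is_derive1_powR; change (0 < 1 + x); lra.
  rewrite (_ : q - 1 = - p); last by rewrite /q; lra.
  by rewrite /decay gtr0_norm// add0r mulr1 /GRing.scale /= mulrA mulVf// mul1r.
rewrite (@ge0_continuous_FTC2y _ (decay p) F 0 0); last 6 first.
- by move=> x _; exact: decay_ge0.
- exact/continuous_subspaceT/continuous_decay.
- by rewrite -(scaler0 _ q^-1); apply: cvgZl_tmp; apply: powR_shift_cvgy; rewrite /q; lra.
- by move=> x x0; have [] := dF x x0.
- apply: cvg_at_right_filter; apply: continuousZl_tmp; apply: continuous_comp.
    by apply: continuousD; [exact: cst_continuous | move=> ?; exact: cvg_id].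
  by apply: continuous_powR; change (0 < 1 + (0:R)); lra.
- move=> x; rewrite in_itv /= andbT => x0.
  by rewrite derive1E; have [_ ->] := dF x x0.
have -> : F 0 = q^-1.
  by rewrite /F /GRing.scale /= (_ : (cst 1 + id) 0 = 1 + 0) // addr0 powR1 /GRing.scale /= mulr1.
rewrite sub0e -EFinN -EFinM; congr (_%:E).
by rewrite /q; field; apply/andP; split; apply/eqP; lra.
Qed.

End Decay.

Section EuclideanSpace.
Variables (R : realType) (n : nat).

Lemma abs_le_sqrt_sumsq (v : 'I_n -> R) i : `|v i| <= Num.sqrt (\sum_(j < n) v j ^+ 2).
Proof.
rewrite -sqrtr_sqr ler_sqrt; last by apply: sumr_ge0 => j _; exact: sqr_ge0.
by rewrite (bigD1 i) //= lerDl; apply: sumr_ge0 => j _; exact: sqr_ge0.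
Qed.

Lemma coord_le_norm (x : n.-tuple R) i : `|tnth x i| <= eucl_norm x.
Proof. exact: (abs_le_sqrt_sumsq (fun j => tnth x j)). Qed.

Lemma coord_le_dist (x y : n.-tuple R) i : `|tnth x i - tnth y i| <= eucl_dist x y.
Proof. exact: (abs_le_sqrt_sumsq (fun j => tnth x j - tnth y j)). Qed.

Lemma eucl_dist_gt0_neq (x y : n.-tuple R) : 0 < eucl_dist x y -> x != y.
Proof.
apply: contraTneq => ->.
by rewrite /eucl_dist big1 ?sqrtr0 ?ltxx // => i _; rewrite subrr expr0n.
Qed.

Lemma measurable_monom (alpha : n.-tuple nat) :
  measurable_fun [set: n.-tuple R] (monom alpha).
Proof.
by apply: measurable_prod => i _; apply: measurable_funX; exact: measurable_tnth.
Qed.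

Lemma monom_le (alpha : n.-tuple nat) (x : n.-tuple R) (m : R) :
  (forall j, `|tnth x j| <= m) -> `|monom alpha x| <= m ^+ mindex_size alpha.
Proof.
move=> hm; rewrite /monom normr_prod /mindex_size -prodrXr.
apply: ler_prod => j _; rewrite normrX exprn_ge0 ?normr_ge0 //=.
by apply: lerXn2r; rewrite ?nnegrE ?normr_ge0 ?(le_trans _ (hm j)) ?normr_ge0.
Qed.

Lemma sint_abs_le (f h : n.-tuple R -> R) (B v : R) :
  measurable_fun [set: n.-tuple R] f -> measurable_fun [set: n.-tuple R] h ->
  (forall y, `|f y| <= h y) -> (lint (fun y => (h y)%:E) <= B%:E)%E ->
  v%:E = sint f -> `|v| <= B.
Proof.
move=> mf mh fh hB.
have part_bounded (phi : n.-tuple R -> R) : measurable_fun [set: n.-tuple R] phi ->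
    (forall y, 0 <= phi y <= h y) ->
    exists r, lint (fun y => (phi y)%:E) = r%:E /\ 0 <= r <= B.
  move=> mphi phi_h.
  have I0 : (0 <= lint (fun y => (phi y)%:E))%E.
    by apply: lint_ge0 => y; rewrite lee_fin; case/andP: (phi_h y).
  have IB : (lint (fun y => (phi y)%:E) <= B%:E)%E.
    apply: le_trans hB; apply: le_lint => [||y|y]; rewrite ?lee_fin.
    - exact/measurable_EFinP.
    - exact/measurable_EFinP.
    - by case/andP: (phi_h y).
    - by case/andP: (phi_h y).
  move: I0 IB; case: (lint _) => // r r0 rB.
  by exists r; rewrite -!lee_fin r0 rB.
rewrite /sint.
have mfN : measurable_fun [set: n.-tuple R] (fun y => - f y) by exact: measurableT_comp.
have [a [-> /andP[a0 aB]]] : exists r, lint (fun y => (Num.max (f y) 0)%:E) = r%:E /\ 0 <= r <= B.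
  apply: part_bounded; first exact: measurable_maxr.
  by move=> y; have := fh y; rewrite ler_norml le_max lexx orbT ge_max /= => /andP[? ?]; apply/andP; split; lra.
have [b [-> /andP[b0 bB]]] : exists r, lint (fun y => (Num.max (- f y) 0)%:E) = r%:E /\ 0 <= r <= B.
  apply: part_bounded; first exact: measurable_maxr.
  by move=> y; have := fh y; rewrite ler_norml le_max lexx orbT ge_max /= => /andP[? ?]; apply/andP; split; lra.
move=> hv; have -> : v = a - b by apply: EFin_inj; rewrite hv EFinB.
by rewrite ler_norml; apply/andP; split; lra.
Qed.

Lemma monom_powR_le_decay (alpha : n.-tuple nat) (x : n.-tuple R) k (s p : R) :
  (forall j, `|tnth x j| <= `|tnth x k|) -> 1 <= `|tnth x k| -> 0 <= p ->
  p * n%:R <= s - (mindex_size alpha)%:R ->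
  `|monom alpha x| * (`|tnth x k| / 2) `^ (- s) <= 4^-1 `^ (- s) * tensor_fun (decay p) x.
Proof.
set m := `|tnth x k|; set N := mindex_size alpha => xk m1 p0 hp.
set w := 2 * m.
have w1 : 1 <= w by rewrite /w; lra.
have w0 : 0 <= w by lra.
have decay_ge : (w `^ (- p)) ^+ n <= tensor_fun (decay p) x.
  rewrite -[n in _ ^+ n]card_ord -prodr_const; apply: ler_prod => j _.
  have := xk j; have := normr_ge0 (tnth x j); rewrite -/m => ? ?.
  by rewrite powR_ge0 /decay /=; apply: powRN_anti => //; rewrite /w; lra.
have -> : m / 2 = w * 4^-1 by rewrite /w; field.
rewrite powRM ?invr_ge0 // mulrA [X in _ <= X]mulrC; apply: ler_wpM2r; first exact: powR_ge0.
apply: le_trans decay_ge; apply: (@le_trans _ _ (w `^ N%:R * w `^ (- s))).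
  apply: ler_wpM2r; first exact: powR_ge0.
  rewrite powR_mulrn //; apply: le_trans (monom_le alpha _) _ => [j|]; first exact: xk.
  by apply: lerXn2r; rewrite ?nnegrE /w; lra.
rewrite -powRD; last by apply/implyP => _; rewrite gt_eqF //; lra.
rewrite -powR_mulrn ?powR_ge0 // -powRrM; apply: ler_powR => //; lra.
Qed.

End EuclideanSpace.

Section Cube.
Variable R : realType.

Definition sym_indic (r t : R) : R := \1_(`[- r, r]) t.

Lemma sym_indicE r t : sym_indic r t = if `|t| <= r then 1 else 0.
Proof.
rewrite /sym_indic indicE; case: ifPn => h.
  by rewrite mem_set //= in_itv /= -ler_norml.
by rewrite memNset //= in_itv /= -ler_norml; apply/negP.
Qed.

Lemma sym_indic_ge0 r t : 0 <= sym_indic r t.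
Proof. by rewrite sym_indicE; case: ifP. Qed.

Lemma measurable_sym_indic r : measurable_fun [set: R] (sym_indic r).
Proof. exact: measurable_indic. Qed.

Lemma integral_sym_indic r : 0 <= r ->
  (\int[lebesgue_measure]_t (sym_indic r t)%:E = (r *+ 2)%:E)%E.
Proof.
move=> r0; rewrite /sym_indic integral_indic // setIT.
have /= -> := @lebesgue_measure_itv R `[- r, r].
rewrite lte_fin; case: ifPn => h; first by rewrite -EFinB opprK mulr2n.
have -> : r = 0 by move: h; rewrite -real_leNgt ?num_real //; lra.
by rewrite mul0rn.
Qed.

Lemma tensor_sym_indic_in n r (x : n.-tuple R) :
  (forall j, `|tnth x j| <= r) -> tensor_fun (sym_indic r) x = 1.
Proof. by move=> hx; rewrite /tensor_fun big1 // => j _; rewrite sym_indicE hx. Qed.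

Lemma tensor_sym_indic_out n r (x : n.-tuple R) j :
  r < `|tnth x j| -> tensor_fun (sym_indic r) x = 0.
Proof. by move=> hj; rewrite /tensor_fun (bigD1 j) //= sym_indicE leNgt hj mul0r. Qed.

Lemma nnintegrable_cube n r : 0 <= r -> nnintegrable (@tensor_fun R n (sym_indic r)).
Proof.
move=> r0; apply: (@nnintegrable_tensor_fun _ _ _ (r *+ 2)).
- exact: measurable_sym_indic.
- exact: sym_indic_ge0.
- by rewrite integral_sym_indic.
Qed.

Lemma abs_le_1_sqr (t : R) : `|t| <= 1 + t ^+ 2.
Proof. have h := sqr_ge0 (`|t| - 1); rewrite -real_normK ?num_real //; nra. Qed.

Lemma compact_support_radius n (g : n.-tuple R -> R) : compact_support g ->
  exists2 M, 0 <= M & forall y, M < eucl_norm y -> g y = 0.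
Proof.
case=> M gM; exists (Num.max M 0); first by rewrite le_max lexx orbT.
by move=> y hy; apply: gM; apply: le_lt_trans hy; rewrite le_max lexx.
Qed.

Lemma compact_L2_inL1 n (g : n.-tuple R -> R) (M : R) : 0 <= M -> inL2 g ->
  (forall y, M < eucl_norm y -> g y = 0) -> inL1 g.
Proof.
move=> M0 g2 gM.
apply: (inL1_dominated g2.1 (h := fun y => tensor_fun (sym_indic M) y + g y ^+ 2)).
  move=> y; have [->|gy] := eqVneq (g y) 0.
    by rewrite normr0 addr_ge0 ?sqr_ge0 // tensor_fun_ge0 //; exact: sym_indic_ge0.
  rewrite tensor_sym_indic_in; first exact: abs_le_1_sqr.
  move=> j; apply: le_trans (coord_le_norm y j) _.
  by rewrite leNgt; apply: contra gy => /gM ->.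
exact: nnintegrableD (nnintegrable_cube n M0) (nnintegrable_sqr g2).
Qed.

End Cube.

Section SizeCondition.
Variables (R : realType) (n : nat) (K : n.-tuple R -> n.-tuple R -> R).
Variables (g u : n.-tuple R -> R) (cK s M Lg : R).
Hypotheses (cK0 : 0 <= cK) (s0 : 0 <= s) (M0 : 0 <= M).
Hypothesis K_size : forall x y, x != y -> `|K x y| <= cK * eucl_dist x y `^ (- s).
Hypothesis measurable_K : forall x, measurable_fun [set: n.-tuple R] (K x).
Hypothesis measurable_g : measurable_fun [set: n.-tuple R] g.
Hypothesis g_support : forall y, M < eucl_norm y -> g y = 0.
Hypothesis g_L1 : (lint (fun y => (`|g y|)%:E) <= Lg%:E)%E.
Hypothesis u_kernel :
  forall x, outside_support g x -> (u x)%:E = sint (fun y => K x y * g y).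

Let far_from_support (x y : n.-tuple R) k : 2 * M + 1 < `|tnth x k| ->
  g y != 0 -> `|tnth x k| / 2 <= eucl_dist x y.
Proof.
move=> hk gy; have yM : eucl_norm y <= M by rewrite leNgt; apply: contra gy => /g_support ->.
have := coord_le_dist x y k; have := coord_le_norm y k.
have := ler_normD (tnth x k - tnth y k) (tnth y k); rewrite subrK; lra.
Qed.

Lemma kernel_tail_le x k : 2 * M + 1 < `|tnth x k| ->
  `|u x| <= cK * (`|tnth x k| / 2) `^ (- s) * Lg.
Proof.
move=> hk; set m := `|tnth x k| in hk *.
have m2 : 0 < m / 2 by move: M0 hk; lra.
have outside : outside_support g x.
  exists 1 => // y dxy; apply: g_support; apply: lt_le_trans (coord_le_norm y k).
  have := M0; have := coord_le_dist x y k; have := ler_normD (tnth x k - tnth y k) (tnth y k).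
  by rewrite subrK -/m; lra.
set c := cK * (m / 2) `^ (- s).
have c0 : 0 <= c by rewrite mulr_ge0 ?powR_ge0.
have mgabs : measurable_fun [set: n.-tuple R] (fun y => `|g y|) by exact: measurableT_comp.
apply: (sint_abs_le (h := fun y => c * `|g y|)) (u_kernel outside).
- exact: measurable_funM.
- exact: measurable_funM.
- move=> y; rewrite normrM; have [->|gy] := eqVneq (g y) 0; first by rewrite normr0 !mulr0.
  apply: ler_wpM2r => //; have dxy := far_from_support hk gy.
  apply: le_trans (K_size (eucl_dist_gt0_neq (lt_le_trans m2 dxy))) _.
  by apply: ler_wpM2l => //; exact: powRN_anti.
- under eq_fun do rewrite EFinM.
  by rewrite lintZl ?EFinM ?lee_wpmul2l ?lee_fin //; exact/measurable_EFinP.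
Qed.

Lemma monom_kernel_le (alpha : n.-tuple nat) (p : R) x : 0 <= p ->
  p * n%:R <= s - (mindex_size alpha)%:R ->
  `|monom alpha x * u x| <=
    (2 * M + 1) ^+ mindex_size alpha * (tensor_fun (sym_indic (2 * M + 1)) x + u x ^+ 2)
    + cK * Lg * 4^-1 `^ (- s) * tensor_fun (decay p) x.
Proof.
set R0 := 2 * M + 1 => p0 hp.
have Lg0 : 0 <= Lg by rewrite -lee_fin; apply: le_trans g_L1; apply: lint_ge0.
have decay_term_ge0 : 0 <= cK * Lg * 4^-1 `^ (- s) * tensor_fun (decay p) x.
  by rewrite !mulr_ge0 ?powR_ge0 ?tensor_fun_ge0 //; exact: decay_ge0.
rewrite normrM; have [x_in|] := pselect (forall j, `|tnth x j| <= R0).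
  rewrite tensor_sym_indic_in // -[X in X <= _]addr0; apply: lerD => //.
  by apply: ler_pM; [exact: normr_ge0 | exact: normr_ge0 | exact: monom_le | exact: abs_le_1_sqr].
move=> /existsNP[j0 /negP]; rewrite -ltNge => x_out.
rewrite (tensor_sym_indic_out x_out) add0r -[X in X <= _]add0r.
apply: lerD.
  by apply: mulr_ge0; [apply: exprn_ge0; rewrite /R0; have := M0; lra | exact: sqr_ge0].
have [k _ k_max] := @arg_maxP _ _ _ j0 predT (fun j => `|tnth x j|) isT.
have xk_out : R0 < `|tnth x k| := lt_le_trans x_out (k_max j0 isT).
apply: le_trans (ler_wpM2l (normr_ge0 _) (kernel_tail_le xk_out)) _.
rewrite (_ : _ * (_ * _ * Lg) = cK * Lg * (`|monom alpha x| * (`|tnth x k| / 2) `^ (- s)));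
  last by ring.
rewrite -[X in _ <= X]mulrA; apply: ler_wpM2l; first by rewrite mulr_ge0.
by apply: monom_powR_le_decay => // [j|]; [exact: k_max | have := M0; rewrite /R0 in xk_out; lra].
Qed.

End SizeCondition.

Lemma decay_exponent (R : realType) (n N : nat) (mu : R) : N%:R < mu ->
  exists2 p, 1 < p & p * n%:R <= n%:R + mu - N%:R.
Proof.
move=> N_lt_mu; have [->|n_gt0] := posnP n; first by exists 2; rewrite ?mulr0; lra.
have n0 : 0 < n%:R :> R by rewrite ltr0n.
exists ((n%:R + mu - N%:R) / n%:R); last by rewrite divfK ?gt_eqF.
by rewrite ltr_pdivlMr // mul1r; lra.
Qed.

Lemma size_condition_decay (R : realType) n (K : n.-tuple R -> n.-tuple R -> R) (C mu : R) :
  (forall x y, x != y -> `|K x y| <= C * Num.min (eucl_dist x y `^ (- n%:R))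
                                                (eucl_dist x y `^ (- (n%:R + mu)))) ->
  forall x y, x != y -> `|K x y| <= Num.max C 0 * eucl_dist x y `^ (- (n%:R + mu)).
Proof.
move=> K_size x y xy; apply: le_trans (K_size x y xy) _.
have dmin_ge0 : 0 <= Num.min (eucl_dist x y `^ (- n%:R)) (eucl_dist x y `^ (- (n%:R + mu))).
  by rewrite le_min !powR_ge0.
apply: le_trans (ler_wpM2r dmin_ge0 (_ : C <= Num.max C 0)) _; first by rewrite le_max lexx.
by apply: ler_wpM2l; [rewrite le_max lexx orbT | rewrite ge_min lexx orbT].
Qed.

Theorem proposition5p2 (R : realType) (n : nat)
  (T : (n.-tuple R -> R) -> (n.-tuple R -> R))
  (K : n.-tuple R -> n.-tuple R -> R) (mu delta : R) :
  (forall (f g : n.-tuple R -> R) (a b : R), inL2 f -> inL2 g ->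
     L2norm2 (fun x => T (fun y => a * f y + b * g y) x - (a * T f x + b * T g x))
       = 0%E) ->
  (exists C : R, forall g : n.-tuple R -> R, inL2 g ->
     inL2 (T g) /\ (L2norm2 (T g) <= C%:E * L2norm2 g)%E) ->
  measurable_fun [set: n.-tuple R * n.-tuple R] (fun p => K p.1 p.2) ->
  (forall (M r : R), 0 < r ->
     (lint (fun x => lint (fun y =>
        (if [&& eucl_norm x <= M, eucl_norm y <= M & r <= eucl_dist x y]
         then `|K x y| else 0)%:E)) < +oo)%E) ->
  (forall (g : n.-tuple R -> R), inL2 g -> compact_support g ->
     forall x, outside_support g x -> (T g x)%:E = sint (fun y => K x y * g y)) ->
  0 < mu ->
  (exists C : R, forall x y, x != y ->
     `|K x y| <= C * Num.min (eucl_dist x y `^ (- n%:R))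
                             (eucl_dist x y `^ (- (n%:R + mu)))) ->
  0 < delta ->
  (exists C : R, forall (r : R), 0 < r < 1 -> forall (j : nat), (0 < j)%N ->
     forall z y : n.-tuple R, eucl_dist y z < r ->
       (lint (fun x => ((\1_(annulus j z r) x) *
           (`|K x y - K x z| + `|K y x - K z x|))%:E)
         <= (C * 2 `^ (- (j%:R * delta)))%:E)%E) ->
  forall (g : n.-tuple R -> R), inL2 g -> compact_support g -> sint g = 0%E ->
  forall alpha : n.-tuple nat, (mindex_size alpha)%:R < Num.min mu delta ->
    inL1 (fun x => monom alpha x * T g x).
Proof.
move=> _ [CT T_bdd] mK _ T_kernel mu0 [C K_size] _ _ g g2 g_cs _ alpha alpha_lt.
have [mTg Tg2] := (T_bdd g g2).1.
have [M M0 g_supp] := compact_support_radius g_cs.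
have [_ g1] := compact_L2_inL1 M0 g2 g_supp.
set Lg := fine (lint (fun y => (`|g y|)%:E)).
have g_L1 : (lint (fun y => (`|g y|)%:E) <= Lg%:E)%E.
  by rewrite fineK // ge0_fin_numE //; apply: lint_ge0.
have [p p1 hp] : exists2 p, 1 < p & p * n%:R <= n%:R + mu - (mindex_size alpha)%:R.
  by apply: decay_exponent; apply: lt_le_trans alpha_lt _; rewrite ge_min lexx.
set R0 := 2 * M + 1; set D := Num.max C 0 * Lg * 4^-1 `^ (- (n%:R + mu)).
apply: (inL1_dominated (h := fun x => R0 ^+ mindex_size alpha *
  (tensor_fun (sym_indic R0) x + T g x ^+ 2) + D * tensor_fun (decay p) x)).
- exact: measurable_funM (measurable_monom alpha) mTg.
- move=> x; apply: (monom_kernel_le (K := K) (g := g)) => //.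
  + by rewrite le_max lexx orbT.
  + by rewrite addr_ge0 // ltW.
  + exact: size_condition_decay.
  + by move=> x'; exact: measurable_fun_pair2 mK.
  + exact: g2.1.
  + exact: T_kernel.
  + by apply: ltW; lra.
- apply: nnintegrableD; apply: nnintegrableZ.
  + by rewrite exprn_ge0 // /R0; lra.
  + by apply: nnintegrableD; [apply: nnintegrable_cube; rewrite /R0; lra | exact: nnintegrable_sqr].
  + by rewrite /D !mulr_ge0 ?powR_ge0 ?le_max ?lexx ?orbT // -lee_fin (le_trans _ g_L1) // lint_ge0.
  + apply: nnintegrable_tensor_fun; [exact: measurable_decay | exact: decay_ge0 |].
    by rewrite integral_decay.
Qed.
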